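(* Let $q=c_{34}x_1x_2+c_{24}x_1x_3+c_{23}x_1x_4+c_{14}x_2x_3+c_{13}x_2x_4+c_{12}x_3x_4\in\mathbb{R}[x_1,x_2,x_3,x_4]$ be Lorentzian. Then for every $r\in\mathbb{R}$, \[ (r+1)\,c_{14}c_{23}+r(r+1)\,c_{13}c_{24}\;\ge\; r\,c_{12}c_{34}. \]
   Context: A homogeneous quadratic polynomial is Lorentzian if its coefficients are nonnegative, its support is M-convex (for exponent vectors $\alpha,\beta$ in the support and $i$ with $\alpha_i>\beta_i$ there is $j$ with $\alpha_j<\beta_j$ and $\alpha-e_i+e_j$ in the support), and its Hessian matrix has at most one positive eigenvalue. *)

From HB Require Import structures.
From mathcomp Require Import all_boot all_order all_algebra.
From mathcomp Require Import reals.
From mathcomp Require Import mpoly.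
Set Implicit Arguments.
Unset Strict Implicit.
Unset Printing Implicit Defensive.
Import Order.TTheory GRing.Theory Num.Theory.
Local Open Scope ring_scope.

Section Lorentzian.
Variables (R : realType) (n : nat).
Implicit Types (p : {mpoly R[n]}).

Definition hessian_at p (x : 'I_n -> R) : 'M[R]_n :=
  \matrix_(i, j) (mderiv j (mderiv i p)).@[x].

(* The Hessian of a homogeneous quadratic is constant; we take it at 0. *)
Definition hessian p : 'M[R]_n := hessian_at p (fun _ => 0).

(* "At most one positive eigenvalue" (counted with multiplicity):
   no two positive roots a, b (a = b allowed, i.e. a double root) of the
   characteristic polynomial. *)
Definition at_most_one_pos_eigenvalue (A : 'M[R]_n) : Prop :=
  forall a b : R, 0 < a -> 0 < b ->
    ~~ (('X - a%:P) * ('X - b%:P) %| char_poly A).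

Definition M_convex_support p : Prop :=
  forall (a b : 'X_{1..n}), a \in msupp p -> b \in msupp p ->
  forall i : 'I_n, (b i < a i)%N ->
    exists j : 'I_n, (a j < b j)%N /\ ((a - U_(i) + U_(j))%MM \in msupp p).

Definition nonneg_coeffs p : Prop := forall m : 'X_{1..n}, 0 <= p@_m.

Definition lorentzian_quadratic p : Prop :=
  [/\ p \is 2.-homog, nonneg_coeffs p, M_convex_support p
    & at_most_one_pos_eigenvalue (hessian p)].

End Lorentzian.

(* q = c34 x1x2 + c24 x1x3 + c23 x1x4 + c14 x2x3 + c13 x2x4 + c12 x3x4,
   with x1..x4 = 'X_0..'X_3. *)
Definition q4 (R : realType) (c12 c13 c14 c23 c24 c34 : R) : {mpoly R[4]} :=
  c34 *: ('X_0 * 'X_1) + c24 *: ('X_0 * 'X_2) + c23 *: ('X_0 * 'X_3)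
  + c14 *: ('X_1 * 'X_2) + c13 *: ('X_1 * 'X_3) + c12 *: ('X_2 * 'X_3).

From HB Require Import structures.
From mathcomp Require Import all_boot all_order all_algebra.
From mathcomp Require Import reals.
From mathcomp Require Import mpoly.
From mathcomp Require Import ring lra.
Import Order.TTheory GRing.Theory Num.Theory.
Local Open Scope ring_scope.

(* Only nonnegativity of the coefficients and the eigenvalue condition are
   needed.  The Hessian of q has zero diagonal and the c_ij off the diagonal;
   its characteristic polynomial is t^4 - S t^2 - 2 T t + D with S, T >= 0,
   4 D <= S^2 and D = (a + b - c)^2 - 4 a b, where a = c14 c23, b = c13 c24,
   c = c12 c34.  If D > 0 this polynomial is positive at 0 and nonpositive at
   sqrt (S / 2), hence has two positive roots (or a positive double root),
   i.e. two positive eigenvalues.  So D <= 0: the difference of the two sides,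
   b r^2 + (a + b - c) r + a, is a quadratic in r with nonnegative extreme
   coefficients and discriminant D <= 0, hence nonnegative. *)

Lemma mnm1D_eq n (i j k l : 'I_n) :
  (U_(i) + U_(j) == U_(k) + U_(l))%MM = ((i == k) && (j == l)) || ((i == l) && (j == k)).
Proof.
apply/eqP/idP => [/mnmP E | /orP [] /andP [/eqP-> /eqP->] //]; last by rewrite addmC.
have := E i; have := E j; rewrite !mnmDE !mnm1E !eqxx.
have [<-|nki] := eqVneq k i; first by move=> /addnI; case: eqP => [-> _ _|//]; rewrite eqxx.
have [<-|nli] := eqVneq l i; last by move=> _ /eqP.
by rewrite [(_ + true)%N]addnC => /addIn; case: eqP => [-> _ _|//]; rewrite !eqxx orbT.
Qed.

Lemma meval_at0 (R : comNzRingType) n (p : {mpoly R[n]}) : p.@[fun _ => 0] = p@_0%MM.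
Proof.
elim/mpolyind: p => [|c m p _ _ IH]; first by rewrite meval0 mcoeff0.
rewrite mevalD mevalZ mevalX mcoeffD mcoeffZ mcoeffX IH; congr (_ * _ + _).
have [->|nz_m] := eqVneq m 0%MM.
  by rewrite big1 // => i _; rewrite mnm0E expr0.
have [i m_i] : exists i, m i != 0%N.
  apply/existsP; move: nz_m; apply: contraNT => /existsPn m0.
  by apply/eqP/mnmP => i; rewrite mnm0E; apply/eqP/negPn/m0.
by rewrite (bigD1 i) //= expr0n (negbTE m_i) mul0r.
Qed.

Lemma hessianE (R : realType) n (p : {mpoly R[n]}) i j :
  hessian p i j = p@_(U_(i) + U_(j)) *+ (i == j).+1.
Proof.
rewrite /hessian /hessian_at mxE meval_at0 !mcoeff_mderiv add0m mnm0E mnm1E.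
by rewrite addmC eq_sym.
Qed.

Section NatIndexedDeterminant.
Variable K : comPzRingType.

Definition det_nat n (f : nat -> nat -> K) := \det (\matrix_(i < n, j < n) f i j).

Lemma det_nat0 f : det_nat 0 f = 1.
Proof. exact: det_mx00. Qed.

Lemma det_natS n f :
  det_nat n.+1 f
  = \sum_(j < n.+1) (-1) ^+ j * f 0%N j * det_nat n (fun i k => f i.+1 (bump j k)).
Proof.
rewrite /det_nat (expand_det_row _ ord0); apply: eq_bigr => j _.
rewrite /cofactor mxE add0n mulrCA mulrA; congr (_ * \det _).
by apply/matrixP => i k; rewrite !mxE.
Qed.

End NatIndexedDeterminant.

Arguments det_nat {K} n f.

Section PositiveRoots.
Context {R : rcfType}.
Implicit Types (p : {poly R}).

Definition at_most_one_pos_root p : Prop :=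
  forall a b, 0 < a -> 0 < b -> ~~ (('X - a%:P) * ('X - b%:P) %| p).

Lemma sign_changes_two_pos_roots p (t0 t1 : R) :
  0 < t0 <= t1 -> 0 < p.[0] -> p.[t0] < 0 -> 0 <= p.[t1] -> ~ at_most_one_pos_root p.
Proof.
move=> /andP [t0_gt0 le_t01] p0_gt0 pt0_lt0 pt1_ge0 one_root.
have [x1 /andP [x1_ge0 x1_le] /rootP px1] : exists2 x, 0 <= x <= t0 & root p x.
  have [|x hx] := @poly_ivt _ (- p) 0 t0 (ltW t0_gt0); last by rewrite rootN; exists x.
  by rewrite !hornerN; apply/andP; split; lra.
have [x2 /andP [x2_ge x2_le] /rootP px2] : exists2 x, t0 <= x <= t1 & root p x.
  by apply: poly_ivt => //; apply/andP; split; lra.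
have x1_gt0 : 0 < x1 by rewrite lt_neqAle x1_ge0 andbT; apply: contraTneq p0_gt0 => ->; lra.
have x1_lt : x1 < t0 by rewrite lt_neqAle x1_le andbT; apply: contraTneq pt0_lt0 => <-; lra.
have x2_gt : t0 < x2 by rewrite lt_neqAle x2_ge andbT; apply: contraTneq pt0_lt0 => ->; lra.
have /negP := one_root x1 x2 x1_gt0 (lt_trans t0_gt0 x2_gt); apply.
rewrite Gauss_dvdp ?coprimep_XsubC ?root_XsubC ?dvdp_XsubCl; last by apply/negP => /eqP; lra.
by apply/andP; split; apply/rootP.
Qed.

Lemma depressed_quartic_const_le0 (S T D : R) :
  at_most_one_pos_root ('X^4 - S%:P * 'X^2 - (2 * T)%:P * 'X + D%:P) ->
  0 <= S -> 0 <= T -> 4 * D <= S ^+ 2 -> D <= 0.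
Proof.
set p := _ + D%:P => one_root S_ge0 T_ge0 le_DS; rewrite leNgt; apply/negP => D_gt0.
have p_eval t : p.[t] = t ^+ 4 - S * t ^+ 2 - 2 * T * t + D by rewrite !hornerE.
have S_gt0 : 0 < S by rewrite lt_def S_ge0 andbT; apply: contraTneq le_DS => ->; lra.
(* t0 minimises t^4 - S t^2 on t >= 0 *)
pose t0 := Num.sqrt (S / 2).
have t0_gt0 : 0 < t0 by rewrite sqrtr_gt0; lra.
have t0_sq : t0 ^+ 2 = S / 2 by rewrite sqr_sqrtr //; lra.
have pt0 : p.[t0] = D - S ^+ 2 / 4 - 2 * T * t0.
  by rewrite p_eval -[4%N]/(2 * 2)%N exprM t0_sq; field.
have : p.[t0] <= 0 by rewrite pt0; have := mulr_ge0 T_ge0 (ltW t0_gt0); lra.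
rewrite le_eqVlt => /orP [/eqP pt0_eq0 | pt0_lt0].
  have T0 : T = 0.
    have /eqP : T * t0 = 0 by move: pt0_eq0; rewrite pt0; nra.
    by rewrite mulf_eq0 (gt_eqF t0_gt0) orbF => /eqP.
  have D_eq : D = (t0 ^+ 2) ^+ 2 by move: pt0_eq0; rewrite pt0 t0_sq T0; lra.
  have S_eq : S = 2 * t0 ^+ 2 by rewrite t0_sq; field.
  have /negP := one_root t0 t0 t0_gt0 t0_gt0; apply.
  have -> : p = ('X - t0%:P) * ('X - t0%:P) * (('X + t0%:P) * ('X + t0%:P)).
    by rewrite /p T0 D_eq S_eq mulr0; ring.
  exact: dvdp_mulIl.
pose t1 := 1 + S + 2 * T.
apply: (@sign_changes_two_pos_roots p t0 t1 _ _ pt0_lt0 _ one_root).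
- rewrite t0_gt0 /=; have : t0 ^+ 2 <= t1 ^+ 2 by rewrite t0_sq /t1; nra.
  by rewrite /t1; nra.
- by rewrite p_eval; lra.
- have t1_ge1 : 1 <= t1 by rewrite /t1; lra.
  have : t1 <= t1 ^+ 2 by rewrite expr2; nra.
  by rewrite p_eval -[4%N]/(2 * 2)%N exprM /t1; nra.
Qed.

End PositiveRoots.

Lemma quadratic_ge0 (R : realFieldType) (a b c x : R) :
  0 <= a -> 0 <= c -> b ^+ 2 <= 4 * a * c -> 0 <= a * x ^+ 2 + b * x + c.
Proof.
rewrite le_eqVlt => /orP [/eqP a0 | a_gt0] c_ge0 disc.
  have b0 : b = 0.
    by apply/eqP; rewrite -sqrf_eq0 eq_le sqr_ge0 andbT; move: disc; rewrite -a0; lra.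
  by rewrite -a0 b0; lra.
rewrite -(pmulr_rge0 _ (_ : 0 < 4 * a)); last by lra.
have -> : 4 * a * (a * x ^+ 2 + b * x + c) = (2 * a * x + b) ^+ 2 + (4 * a * c - b ^+ 2).
  by ring.
by rewrite addr_ge0 ?sqr_ge0 // subr_ge0.
Qed.

Definition q4_coef (R : realType) (c12 c13 c14 c23 c24 c34 : R) (i j : nat) : R :=
  match i, j with
  | 0, 1 | 1, 0 => c34
  | 0, 2 | 2, 0 => c24
  | 0, 3 | 3, 0 => c23
  | 1, 2 | 2, 1 => c14
  | 1, 3 | 3, 1 => c13
  | 2, 3 | 3, 2 => c12
  | _, _ => 0
  end.
Arguments q4_coef {R}.

Section QuadricQ4.
Context {R : realType} {c12 c13 c14 c23 c24 c34 : R}.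

Lemma mcoeff_q4 (i j : 'I_4) :
  (q4 c12 c13 c14 c23 c24 c34)@_(U_(i) + U_(j)) = q4_coef c12 c13 c14 c23 c24 c34 i j.
Proof.
rewrite /q4 !mcoeffD !mcoeffZ -!mpolyXD !mcoeffX !mnm1D_eq.
by case: i j => [[|[|[|[|?]]]] ?] [[|[|[|[|?]]]] ?] //=; rewrite ?mulr0 ?mulr1 ?addr0 ?add0r.
Qed.

Lemma q4_coef_ge0 : nonneg_coeffs (q4 c12 c13 c14 c23 c24 c34) ->
  forall i j : 'I_4, 0 <= q4_coef c12 c13 c14 c23 c24 c34 i j.
Proof. by move=> nn i j; rewrite -mcoeff_q4. Qed.

Lemma hessian_q4 :
  hessian (q4 c12 c13 c14 c23 c24 c34) = \matrix_(i, j) q4_coef c12 c13 c14 c23 c24 c34 i j.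
Proof.
apply/matrixP => i j; rewrite hessianE mcoeff_q4 mxE.
by case: (eqVneq i j) => [<-|//]; case: i => [[|[|[|[|?]]]] ?]; rewrite ?mul0rn.
Qed.

Lemma char_poly_hessian_q4 :
  char_poly (hessian (q4 c12 c13 c14 c23 c24 c34)) =
  'X^4 - (c12 ^+ 2 + c13 ^+ 2 + c14 ^+ 2 + c23 ^+ 2 + c24 ^+ 2 + c34 ^+ 2)%:P * 'X^2
  - (2 * (c12 * c13 * c14 + c12 * c23 * c24 + c13 * c23 * c34 + c14 * c24 * c34))%:P * 'X
  + ((c14 * c23 + c13 * c24 - c12 * c34) ^+ 2 - 4 * (c14 * c23) * (c13 * c24))%:P.
Proof.
have -> : char_poly (hessian (q4 c12 c13 c14 c23 c24 c34))
  = det_nat 4 (fun i j => 'X *+ (i == j) - (q4_coef c12 c13 c14 c23 c24 c34 i j)%:P).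
  by rewrite hessian_q4 /char_poly /det_nat; congr (\det _); apply/matrixP => i j; rewrite !mxE.
by rewrite !(det_natS, big_ord_recr, big_ord0) det_nat0 /=; ring.
Qed.

Lemma q4_const_bound :
  0 <= c12 -> 0 <= c13 -> 0 <= c14 -> 0 <= c23 -> 0 <= c24 -> 0 <= c34 ->
  4 * ((c14 * c23 + c13 * c24 - c12 * c34) ^+ 2 - 4 * (c14 * c23) * (c13 * c24))
  <= (c12 ^+ 2 + c13 ^+ 2 + c14 ^+ 2 + c23 ^+ 2 + c24 ^+ 2 + c34 ^+ 2) ^+ 2.
Proof.
move=> *; set a := c14 * c23; set b := c13 * c24; set c := c12 * c34; set S := _ + c34 ^+ 2.
have [a_ge0 b_ge0 c_ge0] : [/\ 0 <= a, 0 <= b & 0 <= c] by split; apply: mulr_ge0.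
have amgm : 2 * (a + b + c) <= S.
  have := sqr_ge0 (c14 - c23); have := sqr_ge0 (c13 - c24); have := sqr_ge0 (c12 - c34).
  by rewrite /S /a /b /c !expr2; lra.
have : (2 * (a + b + c)) ^+ 2 <= S ^+ 2 by rewrite ler_pXn2r // nnegrE; lra.
(* the constant term is (a + b + c)^2 - 4 (a b + b c + c a) *)
by rewrite !expr2; nra.
Qed.

End QuadricQ4.

Theorem lemma5p2 (R : realType) (c12 c13 c14 c23 c24 c34 : R) :
  lorentzian_quadratic (q4 c12 c13 c14 c23 c24 c34) ->
  forall r : R,
    (r + 1) * c14 * c23 + r * (r + 1) * c13 * c24 >= r * c12 * c34.
Proof.
case=> _ /q4_coef_ge0 coef_ge0 _ one_pos_eigenvalue r.
have c12_ge0 : 0 <= c12 := coef_ge0 2%R 3%R.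
have c13_ge0 : 0 <= c13 := coef_ge0 1%R 3%R.
have c14_ge0 : 0 <= c14 := coef_ge0 1%R 2%R.
have c23_ge0 : 0 <= c23 := coef_ge0 0%R 3%R.
have c24_ge0 : 0 <= c24 := coef_ge0 0%R 2%R.
have c34_ge0 : 0 <= c34 := coef_ge0 0%R 1%R.
have disc_le0 : (c14 * c23 + c13 * c24 - c12 * c34) ^+ 2 - 4 * (c14 * c23) * (c13 * c24) <= 0.
  move: one_pos_eigenvalue; rewrite /at_most_one_pos_eigenvalue char_poly_hessian_q4.
  move=> /depressed_quartic_const_le0; apply.
  - by rewrite !addr_ge0 ?sqr_ge0.
  - by rewrite !addr_ge0 ?mulr_ge0.
  - exact: q4_const_bound.
rewrite -subr_ge0.
have -> : (r + 1) * c14 * c23 + r * (r + 1) * c13 * c24 - r * c12 * c34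
  = (c13 * c24) * r ^+ 2 + (c14 * c23 + c13 * c24 - c12 * c34) * r + c14 * c23 by ring.
by apply: quadratic_ge0; rewrite ?mulr_ge0 //; lra.
Qed.
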